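(* Let $\mathbf M=(M,\vee_{\mathbf M},(\sqsubseteq^n_{\mathbf M})_{n\ge1})$ be a multi-argument specialization semilattice and let $\widetilde{\mathbf M}$, $K$ and $\upsilon_{\mathbf M}$ be as constructed in the context. Then: (1) $\widetilde{\mathbf M}$ is a principal regular multi-argument specialization semilattice. (2) $\upsilon_{\mathbf M}$ is an embedding of $\mathbf M$ into $\widetilde{\mathbf M}$. (3) For every principal regular multi-argument specialization semilattice $\mathbf T$ and every homomorphism $\eta:\mathbf M\to\mathbf T$ there is a unique $K$-homomorphism $\widetilde\eta:\widetilde{\mathbf M}\to\mathbf T$ such that $\widetilde\eta(\upsilon_{\mathbf M}(a))=\eta(a)$ for all $a\in M$. (4) If $\mathbf U$ is another multi-argument specialization semilattice and $\psi:\mathbf M\to\mathbf U$ is a homomorphism, then there is a unique $K$-homomorphism $\widetilde\psi:\widetilde{\mathbf M}\to\widetilde{\mathbf U}$ such that $\widetilde\psi(\upsilon_{\mathbf M}(a))=\upsilon_{\mathbf U}(\psi(a))$ for all $a\in M$ (where $\widetilde{\mathbf U},\upsilon_{\mathbf U}$ are constructed from $\mathbf U$ in the same way).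
   Context: A multi-argument specialization semilattice is a join semilattice $(M,\vee)$ (order $a\le b$ iff $a\vee b=b$) with, for each $n\ge1$, an $(n+1)$-ary relation $a\sqsubseteq^n b_1,\dots,b_n$ (also written $a\sqsubseteq b_1,\dots,b_n$) such that: (M1) $a\sqsubseteq a$; (M2) $a\sqsubseteq b_1,\dots,b_n$ and $b_1\sqsubseteq c$ imply $a\sqsubseteq c,b_2,\dots,b_n$; (M3) $a\le b$ and $b\sqsubseteq c_1,\dots,c_m$ imply $a\sqsubseteq c_1,\dots,c_m$; (M4) $a\sqsubseteq b_1,\dots,b_n$ implies $a\sqsubseteq b_{\sigma1},\dots,b_{\sigma n}$ for every permutation $\sigma$; (M5) $a\sqsubseteq b_1,\dots,b_n,b_n$ implies $a\sqsubseteq b_1,\dots,b_n$; (M6) $a\sqsubseteq b_1,\dots,b_n$ implies $a\sqsubseteq b_1,\dots,b_n,b_{n+1}$; (M7) $a\sqsubseteq b_1,\dots,b_n$ and $a_1\sqsubseteq b_1,\dots,b_n$ imply $a\vee a_1\sqsubseteq b_1,\dots,b_n$. It is principal if for every $x$ there is a $\le$-largest $y$ with $y\sqsubseteq^1 x$, denoted $Kx$; a principal one is regular if $a\sqsubseteq^n b_1,\dots,b_n$ holds iff $a\le Kb_1\vee\dots\vee Kb_n$. A homomorphism is a join-preserving map $\varphi$ with $a\sqsubseteq^n b_1,\dots,b_n\Rightarrow\varphi(a)\sqsubseteq^n\varphi(b_1),\dots,\varphi(b_n)$ for all $n$; an embedding is an injective homomorphism for which the converse implications also hold. A $K$-homomorphism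 between principal ones is a homomorphism $\varphi$ with $\varphi(Ka)=K\varphi(a)$ for all $a$. Construction: let $M^{<\omega}$ be the set of finite subsets of $M$. On $M\times M^{<\omega}$ put $(a,\{b_1,\dots,b_h\})\precsim(c,\{d_1,\dots,d_k\})$ iff (a1) there is $d\in M$ with $d\sqsubseteq_{\mathbf M}d_1,\dots,d_k$ and $a\le_{\mathbf M}c\vee_{\mathbf M}d$ (if $k=0$ this reads $a\le_{\mathbf M}c$), and (a2) for every $i\le h$ there is $j\le k$ with $b_i\sqsubseteq^1_{\mathbf M}d_j$. Let $x\sim y$ iff $x\precsim y$ and $y\precsim x$ (an equivalence relation and a congruence for the product semilattice $(M,\vee_{\mathbf M})\times(M^{<\omega},\cup)$). Let $\widetilde M$ be the quotient, with classes $[a,\{b_1,\dots,b_h\}]$ and join $[a,\{b_1,\dots,b_h\}]\vee[c,\{d_1,\dots,d_k\}]=[a\vee_{\mathbf M}c,\{b_1,\dots,b_h,d_1,\dots,d_k\}]$, and $\le$ the induced order. Define $K[a,\{b_1,\dots,b_h\}]=[a,\{a\vee_{\mathbf M}b_1\vee_{\mathbf M}\dots\vee_{\mathbf M}b_h\}]$ (well defined). For $n\ge1$ define $x\sqsubseteq^n y_1,\dots,y_n$ in $\widetilde M$ iff $x\le Ky_1\vee\dots\vee Ky_n$. Set $\widetilde{\mathbf M}=(\widetilde M,\vee,(\sqsubseteq^n)_{n\ge1})$ and $\upsilon_{\mathbf M}(a)=[a,\emptyset]$ for $a\in M$. *)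

From Stdlib Require Import List Permutation ClassicalEpsilon.
Import ListNotations.
Set Implicit Arguments.

(* Raw data of a multi-argument specialization semilattice.
   [mspec a b bs] means  a ⊑^n b, b_2, ..., b_n  with  b :: bs = [b_1;...;b_n],
   so the relation is only given for n >= 1. *)
Record msl := MSL {
  car :> Type;
  mjoin : car -> car -> car;
  mspec : car -> car -> list car -> Prop }.

Definition mle (M : msl) (a b : M) : Prop := mjoin M a b = b.

Definition bigj {A : Type} (j : A -> A -> A) (k : A) (ks : list A) : A :=
  fold_left j ks k.

Record is_mass (M : msl) : Prop := {
  sl_assoc : forall a b c : M, mjoin M a (mjoin M b c) = mjoin M (mjoin M a b) c;
  sl_comm : forall a b : M, mjoin M a b = mjoin M b a;
  sl_idem : forall a : M, mjoin M a a = a;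
  M1 : forall a : M, mspec M a a [];
  M2 : forall (a b1 c : M) (bs : list M),
         mspec M a b1 bs -> mspec M b1 c [] -> mspec M a c bs;
  M3 : forall (a b c : M) (cs : list M),
         mle M a b -> mspec M b c cs -> mspec M a c cs;
  M4 : forall (a b c : M) (bs cs : list M),
         mspec M a b bs -> Permutation (b :: bs) (c :: cs) -> mspec M a c cs;
  M5 : forall (a b : M) (bs : list M),
         mspec M a b (bs ++ [last bs b]) -> mspec M a b bs;
  M6 : forall (a b c : M) (bs : list M),
         mspec M a b bs -> mspec M a b (bs ++ [c]);
  M7 : forall (a a1 b : M) (bs : list M),
         mspec M a b bs -> mspec M a1 b bs -> mspec M (mjoin M a a1) b bs }.

Definition isK (M : msl) (x y : M) : Prop :=
  mspec M y x [] /\ forall z, mspec M z x [] -> mle M z y.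

Definition principal (M : msl) : Prop := forall x : M, exists y, isK M x y.

Definition regular (M : msl) : Prop :=
  principal M /\
  forall (a b : M) (bs : list M),
    mspec M a b bs <->
    exists (kb : M) (kbs : list M),
      isK M b kb /\ Forall2 (isK M) bs kbs /\ mle M a (bigj (mjoin M) kb kbs).

Definition hom {M T : msl} (f : M -> T) : Prop :=
  (forall a b : M, f (mjoin M a b) = mjoin T (f a) (f b)) /\
  (forall (a b : M) (bs : list M), mspec M a b bs -> mspec T (f a) (f b) (map f bs)).

Definition embedding {M T : msl} (f : M -> T) : Prop :=
  hom f /\ (forall a b : M, f a = f b -> a = b) /\
  (forall (a b : M) (bs : list M), mspec T (f a) (f b) (map f bs) -> mspec M a b bs).

Definition Khom {M T : msl} (f : M -> T) : Prop :=
  hom f /\ forall a ka : M, isK M a ka -> isK T (f a) (f ka).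

Section Construction.
Variable M : msl.

(* finite subsets of M are represented by lists *)
Definition prec (x y : M * list M) : Prop :=
  let (a, B) := x in let (c, D) := y in
  (match D with
   | [] => mle M a c
   | d1 :: ds => exists d : M, mspec M d d1 ds /\ mle M a (mjoin M c d)
   end) /\
  (forall b, In b B -> exists d, In d D /\ mspec M b d []).

Definition sim (x y : M * list M) : Prop := prec x y /\ prec y x.

Definition tcar : Type := { P : M * list M -> Prop | exists x, P = sim x }.

Definition tcls (x : M * list M) : tcar := exist _ (sim x) (ex_intro _ x eq_refl).

Definition trep (X : tcar) : M * list M :=
  proj1_sig (constructive_indefinite_description _ (proj2_sig X)).

Definition tjoin (X Y : tcar) : tcar :=
  tcls (mjoin M (fst (trep X)) (fst (trep Y)), snd (trep X) ++ snd (trep Y)).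

Definition tK (X : tcar) : tcar :=
  tcls (fst (trep X), [bigj (mjoin M) (fst (trep X)) (snd (trep X))]).

Definition tle (X Y : tcar) : Prop := tjoin X Y = Y.

Definition tspec (X Y : tcar) (Ys : list tcar) : Prop :=
  tle X (bigj tjoin (tK Y) (map tK Ys)).

Definition Mtilde : msl := MSL tjoin tspec.

Definition ups (a : M) : Mtilde := tcls (a, []).

End Construction.

(* A pair (a, {b_1, ..., b_h}) stands for the formal join a ∨ K b_1 ∨ ... ∨ K b_h, and
   (a1), (a2) say exactly when one formal join lies below another in every principal
   regular extension of M.  On pairs
   K (a, B) = (a, {a ∨ ⋁ B}) is a closure operator, which makes M~, with
   x ⊑ y_1, ..., y_n iff x ≤ K y_1 ∨ ... ∨ K y_n, principal and regular.  M embeds since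
   a ⊑ b_1, ..., b_n holds in M iff (a, ∅) ≾ (b_1 ∨ ... ∨ b_n, {b_1, ..., b_n}).
   A homomorphism η into a regular T extends by (a, B) ↦ η a ∨ K (η b_1) ∨ ... ∨ K (η b_h),
   which is monotone for ≾ and hence well defined on classes; it is the only K-homomorphism
   extending η because every class equals υ a ∨ K (υ b_1) ∨ ... ∨ K (υ b_h).
   Part (4) is part (3) applied to υ_U ∘ ψ. *)

From Stdlib Require Import List Permutation ClassicalEpsilon FunctionalExtensionality
  PropExtensionality ProofIrrelevance.
Import ListNotations.
Set Implicit Arguments.
Unset Strict Implicit.

Lemma last_in_cons (A : Type) (l : list A) (d : A) : In (last l d) (d :: l).
Proof.
  destruct l as [|x l] using rev_ind; [now left|].
  rewrite last_last; right; apply in_or_app; right; now left.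
Qed.

Lemma bigj_ind (A : Type) (j : A -> A -> A) (P : A -> Prop) k l :
  P k -> (forall x, In x l -> P x) -> (forall u v, P u -> P v -> P (j u v)) ->
  P (bigj j k l).
Proof.
  revert k; induction l as [|y l IH]; intros k Pk Pl Pj; simpl; [exact Pk|].
  apply IH; auto using in_cons, in_eq.
Qed.

Lemma bigj_morph (A B : Type) (jA : A -> A -> A) (jB : B -> B -> B) (h : A -> B) k l :
  (forall a b, h (jA a b) = jB (h a) (h b)) -> h (bigj jA k l) = bigj jB (h k) (map h l).
Proof.
  intro Hh; revert k; induction l as [|y l IH]; intro k; simpl; [reflexivity|].
  now rewrite IH, Hh.
Qed.

Class join_semilattice (A : Type) (j : A -> A -> A) : Prop := {
  join_assoc : forall a b c, j a (j b c) = j (j a b) c;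
  join_comm : forall a b, j a b = j b a;
  join_idem : forall a, j a a = a }.

Definition jle (A : Type) (j : A -> A -> A) (a b : A) : Prop := j a b = b.

Record closure_op (A : Type) (j : A -> A -> A) (K : A -> A) : Prop := {
  closure_ext : forall x, jle j x (K x);
  closure_mono : forall x y, jle j x y -> jle j (K x) (K y);
  closure_idem : forall x, K (K x) = K x }.

Section JoinSemilatticeTheory.
Context {A : Type} {j : A -> A -> A} `{Hj : join_semilattice A j}.
Local Notation "a <= b" := (jle j a b).

Lemma jle_refl a : a <= a.
Proof. apply join_idem. Qed.

Lemma jle_trans a b c : a <= b -> b <= c -> a <= c.
Proof. unfold jle; intros Hab Hbc. now rewrite <- Hbc, join_assoc, Hab. Qed.

Lemma jle_antisym a b : a <= b -> b <= a -> a = b.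
Proof. unfold jle; intros Hab Hba. now rewrite <- Hba, join_comm, Hab. Qed.

Lemma jle_joinl a b : a <= j a b.
Proof. unfold jle. now rewrite join_assoc, join_idem. Qed.

Lemma jle_joinr a b : b <= j a b.
Proof. rewrite join_comm. apply jle_joinl. Qed.

Lemma join_le_iff a b c : j a b <= c <-> a <= c /\ b <= c.
Proof.
  split.
  - intro H; split; eapply jle_trans; [apply jle_joinl|exact H|apply jle_joinr|exact H].
  - unfold jle; intros [Hac Hbc]. now rewrite <- join_assoc, Hbc, Hac.
Qed.

Lemma join_mono a b a' b' : a <= a' -> b <= b' -> j a b <= j a' b'.
Proof.
  intros Ha Hb; apply join_le_iff; split; eapply jle_trans;
    [exact Ha|apply jle_joinl|exact Hb|apply jle_joinr].
Qed.

Lemma bigj_le_iff k l z : bigj j k l <= z <-> forall x, In x (k :: l) -> x <= z.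
Proof.
  revert k; induction l as [|y l IH]; intro k; simpl.
  - split; [now intros H x [<-|[]]|auto].
  - rewrite IH; split.
    + intros H x [<-|[<-|Hx]]; [| |apply H, in_cons, Hx];
        apply (join_le_iff k y z), H, in_eq.
    + intros H x [<-|Hx]; [apply join_le_iff; split|]; apply H; simpl; auto.
Qed.

Lemma bigj_ub k l x : In x (k :: l) -> x <= bigj j k l.
Proof. intro Hx; now apply (bigj_le_iff k l _); [apply jle_refl|]. Qed.

Lemma bigj_incl k l k' l' : incl (k :: l) (k' :: l') -> bigj j k l <= bigj j k' l'.
Proof. intro Hincl; apply bigj_le_iff; intros x Hx; apply bigj_ub, Hincl, Hx. Qed.

Lemma bigj_mono_head k k' l : k <= k' -> bigj j k l <= bigj j k' l.
Proof.
  intro Hk; apply bigj_le_iff; intros x [<-|Hx].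
  - eapply jle_trans; [exact Hk|apply bigj_ub, in_eq].
  - apply bigj_ub, in_cons, Hx.
Qed.

Lemma bigj_app_join k1 k2 l1 l2 :
  bigj j (j k1 k2) (l1 ++ l2) = j (bigj j k1 l1) (bigj j k2 l2).
Proof.
  apply jle_antisym.
  - apply bigj_le_iff; intros x [<-|Hx].
    + apply join_mono; apply bigj_ub, in_eq.
    + destruct (in_app_or _ _ _ Hx) as [H|H];
        [eapply jle_trans; [|apply jle_joinl] | eapply jle_trans; [|apply jle_joinr]];
        apply bigj_ub, in_cons, H.
  - apply join_le_iff; split; apply bigj_le_iff; intros x [<-|Hx].
    + eapply jle_trans; [apply jle_joinl|apply bigj_ub, in_eq].
    + apply bigj_ub, in_cons, in_or_app; auto.
    + eapply jle_trans; [apply jle_joinr|apply bigj_ub, in_eq].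
    + apply bigj_ub, in_cons, in_or_app; auto.
Qed.

Lemma closure_op_intro K :
  (forall x, x <= K x) -> (forall x y, x <= K y -> K x <= K y) -> closure_op j K.
Proof.
  intros Hext Hle; split; [exact Hext| |].
  - intros x y Hxy; apply Hle; eapply jle_trans; eauto.
  - intro x; apply jle_antisym; [apply Hle, jle_refl|apply Hext].
Qed.

Lemma closure_le K (HK : closure_op j K) x y : x <= K y -> K x <= K y.
Proof.
  intro Hxy; rewrite <- (closure_idem HK y); now apply (closure_mono HK).
Qed.

Lemma closure_bigj_map K (HK : closure_op j K) k l :
  K (bigj j k (map K l)) = K (bigj j k l).
Proof.
  apply jle_antisym.
  - apply (closure_le HK), bigj_le_iff; intros x [<-|Hx].
    + eapply jle_trans; [|apply (closure_ext HK)]; apply bigj_ub, in_eq.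
    + apply in_map_iff in Hx; destruct Hx as [y [<- Hy]].
      apply (closure_mono HK), bigj_ub, in_cons, Hy.
  - apply (closure_mono HK), bigj_le_iff; intros x [<-|Hx].
    + apply bigj_ub, in_eq.
    + eapply jle_trans; [apply (closure_ext HK)|]; apply bigj_ub, in_cons, in_map, Hx.
Qed.

End JoinSemilatticeTheory.

Lemma hom_le (M T : msl) (f : M -> T) (a b : M) : hom f -> mle M a b -> mle T (f a) (f b).
Proof. intros [Hj _] H; unfold mle; now rewrite <- Hj, H. Qed.

Lemma hom_comp (A B C : msl) (f : A -> B) (g : B -> C) :
  hom f -> hom g -> hom (fun a => g (f a)).
Proof.
  intros [Fj Fs] [Gj Gs]; split.
  - intros a b; now rewrite Fj, Gj.
  - intros a b bs H; rewrite <- map_map; apply Gs, Fs, H.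
Qed.

Definition mspecl {M : msl} (a : M) (L : list M) : Prop :=
  match L with [] => False | b :: bs => mspec M a b bs end.

Definition spec1_covered {M : msl} (B D : list M) : Prop :=
  forall b, In b B -> exists d, In d D /\ mspec M b d [].

Lemma join_semilattice_mass (M : msl) : is_mass M -> join_semilattice (mjoin M).
Proof. intro HM; constructor; apply HM. Qed.

Section Construction.
Variable M : msl.
Hypothesis HM : is_mass M.
Local Notation j := (mjoin M).
Local Notation "a <= b" := (jle (mjoin M) a b).

#[local] Instance join_semilattice_M : join_semilattice (mjoin M) := join_semilattice_mass HM.

Lemma mspec1_of_le a b : a <= b -> mspec M a b [].
Proof. intro Hab; exact (M3 HM b [] Hab (M1 HM b)). Qed.

Lemma mspecl_le (a b : M) L : a <= b -> mspecl b L -> mspecl a L.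
Proof. destruct L; [contradiction|apply (M3 HM)]. Qed.

Lemma mspecl_join (a b : M) L : mspecl a L -> mspecl b L -> mspecl (j a b) L.
Proof. destruct L; [contradiction|apply (M7 HM)]. Qed.

Lemma mspecl_perm (a : M) L L' : Permutation L L' -> mspecl a L -> mspecl a L'.
Proof.
  destruct L as [|b bs], L' as [|c cs]; simpl; intros P S; try contradiction.
  - exact (Permutation_nil_cons (Permutation_sym P)).
  - exact (M4 HM _ S P).
Qed.

Lemma mspecl_cons (a c : M) L : mspecl a L -> mspecl a (c :: L).
Proof.
  destruct L as [|b bs]; [contradiction|]; intro S.
  apply mspecl_perm with ((b :: bs) ++ [c]); [apply Permutation_sym, Permutation_cons_append|].
  exact (M6 HM _ _ c _ S).
Qed.

Lemma mspecl_app_l (a : M) L' L : mspecl a L -> mspecl a (L' ++ L).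
Proof. intro S; induction L' as [|c L' IH]; [exact S|apply mspecl_cons, IH]. Qed.

Lemma mspecl_dup_last (a : M) L z : mspecl a (L ++ [z; z]) -> mspecl a (L ++ [z]).
Proof.
  destruct L as [|b bs]; simpl; intro S.
  - exact (M5 HM a z [] S).
  - apply (M5 HM); rewrite last_last, <- app_assoc; exact S.
Qed.

Lemma mspecl_contract (a x : M) L : In x L -> mspecl a (x :: L) -> mspecl a L.
Proof.
  intros Hx S; apply in_split in Hx; destruct Hx as [L1 [L2 ->]].
  apply mspecl_perm with ((L1 ++ L2) ++ [x]).
  { rewrite <- app_assoc; apply Permutation_app_head, Permutation_sym, Permutation_cons_append. }
  apply mspecl_dup_last, mspecl_perm with (x :: L1 ++ x :: L2); [|exact S].
  apply Permutation_trans with ([x; x] ++ L1 ++ L2); [|apply Permutation_app_comm].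
  apply perm_skip, Permutation_sym, Permutation_middle.
Qed.

Lemma mspecl_incl (a : M) L L' : mspecl a L -> incl L L' -> mspecl a L'.
Proof.
  intros S Hincl; apply (mspecl_app_l L') in S.
  induction L as [|x L IH]; [now rewrite app_nil_r in S|].
  destruct (incl_cons_inv Hincl) as [Hx HL].
  apply IH; [|exact HL].
  apply mspecl_contract with x; [apply in_or_app; left; exact Hx|].
  apply mspecl_perm with (L' ++ x :: L); [apply Permutation_sym, Permutation_middle|exact S].
Qed.

(* Each element of [L] is traded in turn, via M2, for an element of [L'] above it. *)
Lemma mspecl_covered (a : M) L L' : mspecl a L -> spec1_covered L L' -> mspecl a L'.
Proof.
  intros S Hcov; change L' with ([] ++ L'); change L with ([] ++ L) in S.
  revert S; generalize (@nil M) as E.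
  induction L as [|x L IH]; intros E S.
  - rewrite app_nil_r in S.
    apply mspecl_perm with (L' ++ E); [apply Permutation_app_comm|apply mspecl_app_l, S].
  - destruct (Hcov x (in_eq x L)) as [y [Hy Sxy]].
    assert (S' : mspecl a ((E ++ [y]) ++ L)).
    { apply mspecl_perm with (y :: E ++ L).
      { rewrite <- app_assoc; apply Permutation_middle. }
      apply (M2 HM a x y (E ++ L)); [|exact Sxy].
      change (mspecl a (x :: E ++ L)); apply mspecl_perm with (E ++ x :: L);
        [apply Permutation_sym, Permutation_middle|exact S]. }
    apply IH in S'; [|intros b Hb; apply Hcov, in_cons, Hb].
    apply mspecl_incl with ((E ++ [y]) ++ L'); [exact S'|].
    rewrite <- app_assoc; apply incl_app_app; [apply incl_refl|].
    apply incl_app; [intros z [<-|[]]; exact Hy|apply incl_refl].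
Qed.

Lemma mspecl_in (x : M) L : In x L -> mspecl x L.
Proof. intro Hx; apply mspecl_incl with [x]; [apply (M1 HM)|now intros y [<-|[]]]. Qed.

Lemma mspecl_bigj (b : M) bs : mspecl (bigj j b bs) (b :: bs).
Proof.
  apply bigj_ind with (P := fun x => mspecl x (b :: bs));
    [apply mspecl_in, in_eq|intros; apply mspecl_in, in_cons; auto|intros u v; apply mspecl_join].
Qed.

Lemma mspecl_bound (d s : M) L : mspecl d L -> (forall x, In x L -> x <= s) -> mspec M d s [].
Proof.
  intros S Hs; change (mspecl d [s]); apply mspecl_covered with L; [exact S|].
  intros x Hx; exists s; split; [apply in_eq|apply mspec1_of_le, Hs, Hx].
Qed.

Lemma spec1_covered_incl (B D : list M) : incl B D -> spec1_covered B D.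
Proof. intros Hincl b Hb; exists b; split; [apply Hincl, Hb|apply (M1 HM)]. Qed.

Lemma spec1_covered_trans (B D F : list M) :
  spec1_covered B D -> spec1_covered D F -> spec1_covered B F.
Proof.
  intros HBD HDF b Hb; destruct (HBD b Hb) as [d [Hd Sbd]]; destruct (HDF d Hd) as [f [Hf Sdf]].
  exists f; split; [exact Hf|exact (M2 HM b d f [] Sbd Sdf)].
Qed.

Lemma spec1_covered_app (B D F : list M) :
  spec1_covered B F -> spec1_covered D F -> spec1_covered (B ++ D) F.
Proof. intros HB HD b Hb; destruct (in_app_or _ _ _ Hb); auto. Qed.

Lemma mspec1_bigj (a s : M) B :
  mspec M a s [] -> (forall b, In b B -> mspec M b s []) -> mspec M (bigj j a B) s [].
Proof. intros Ha HB; apply bigj_ind; [exact Ha|exact HB|intros u v; apply (M7 HM)]. Qed.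

(* Condition (a1) of the construction, stated uniformly in [D]: when [D <> []] the
   disjunct [a <= c] is subsumed by the other one. *)
Definition cond_a1 (a c : M) (D : list M) : Prop :=
  a <= c \/ exists d, mspecl d D /\ a <= j c d.

Lemma prec_iff x y :
  prec M x y <-> cond_a1 (fst x) (fst y) (snd y) /\ spec1_covered (snd x) (snd y).
Proof.
  destruct x as [a B], y as [c [|d1 ds]]; unfold prec, cond_a1, spec1_covered; simpl.
  - split; [intros [H1 H2]; auto|intros [[H1|[d [[] _]]] H2]; auto].
  - apply and_iff_compat_r; split; [intros [d Hd]; right; exists d; exact Hd|].
    intros [H1|[d Hd]]; [|exists d; exact Hd].
    exists d1; split; [change (mspecl d1 (d1 :: ds)); apply mspecl_in, in_eq|].
    eapply jle_trans; [exact H1|apply jle_joinl].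
Qed.

Lemma cond_a1_of_mspecl (d c : M) D : mspecl d D -> cond_a1 d c D.
Proof. intro S; right; exists d; split; [exact S|apply jle_joinr]. Qed.

Lemma cond_a1_le (a a' c : M) D : a' <= a -> cond_a1 a c D -> cond_a1 a' c D.
Proof.
  intros Ha [H|[d [S H]]]; [left|right; exists d; split; [exact S|]];
    eapply jle_trans; eauto.
Qed.

Lemma cond_a1_join (a b c : M) D : cond_a1 a c D -> cond_a1 b c D -> cond_a1 (j a b) c D.
Proof.
  intros [Ha|[d [Sd Ha]]] [Hb|[f [Sf Hb]]].
  - left; apply join_le_iff; auto.
  - right; exists f; split; [exact Sf|apply join_le_iff; split; [|exact Hb]].
    eapply jle_trans; [exact Ha|apply jle_joinl].
  - right; exists d; split; [exact Sd|apply join_le_iff; split; [exact Ha|]].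
    eapply jle_trans; [exact Hb|apply jle_joinl].
  - right; exists (j d f); split; [apply mspecl_join; assumption|].
    apply join_le_iff; split; [eapply jle_trans; [exact Ha|]|eapply jle_trans; [exact Hb|]];
      apply join_mono; [apply jle_refl|apply jle_joinl|apply jle_refl|apply jle_joinr].
Qed.

Lemma cond_a1_covered (a c : M) D F : cond_a1 a c D -> spec1_covered D F -> cond_a1 a c F.
Proof.
  intros [H|[d [S H]]] Hcov; [now left|].
  right; exists d; split; [exact (mspecl_covered S Hcov)|exact H].
Qed.

Lemma cond_a1_trans (a c e : M) D F :
  cond_a1 a c D -> spec1_covered D F -> cond_a1 c e F -> cond_a1 a e F.
Proof.
  intros [H|[d [S H]]] Hcov Hc; [exact (cond_a1_le H Hc)|].
  apply (cond_a1_le H), cond_a1_join; [exact Hc|].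
  apply cond_a1_of_mspecl, (mspecl_covered S Hcov).
Qed.

Lemma cond_a1_spec1_bigj (a c : M) D : cond_a1 a c D -> mspec M a (bigj j c D) [].
Proof.
  intros [H|[d [S H]]].
  - apply mspec1_of_le; eapply jle_trans; [exact H|apply bigj_ub, in_eq].
  - apply (M3 HM (bigj j c D) [] H), (M7 HM).
    + apply mspec1_of_le, bigj_ub, in_eq.
    + apply (mspecl_bound S); intros x Hx; apply bigj_ub, in_cons, Hx.
Qed.

Lemma mspecl_iff_cond_a1 (a b : M) bs :
  mspecl a (b :: bs) <-> cond_a1 a (bigj j b bs) (b :: bs).
Proof.
  split; [apply cond_a1_of_mspecl|].
  intros [H|[d [S H]]]; apply (mspecl_le H); [|apply mspecl_join; [|exact S]];
    apply mspecl_bigj.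
Qed.

Lemma cond_a1_bigj (a : M) B : cond_a1 (bigj j a B) a B.
Proof.
  destruct B as [|b bs]; [left; apply jle_refl|].
  right; exists (bigj j b bs); split; [apply mspecl_bigj|].
  change (bigj j a (b :: bs)) with (bigj j (j a b) ([] ++ bs)).
  rewrite bigj_app_join; apply jle_refl.
Qed.

Lemma spec1_covered_bigj (c : M) D : spec1_covered D [bigj j c D].
Proof.
  intros d Hd; exists (bigj j c D); split; [apply in_eq|].
  apply mspec1_of_le, bigj_ub, in_cons, Hd.
Qed.

Lemma prec_refl x : prec M x x.
Proof.
  apply prec_iff; split; [left; apply jle_refl|apply spec1_covered_incl, incl_refl].
Qed.

Lemma prec_trans x y z : prec M x y -> prec M y z -> prec M x z.
Proof.
  rewrite !prec_iff; intros [H1 H2] [H3 H4]; split.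
  - exact (cond_a1_trans H1 H4 H3).
  - exact (spec1_covered_trans H2 H4).
Qed.

Definition pjoin (x y : M * list M) : M * list M := (j (fst x) (fst y), snd x ++ snd y).

Definition pK (x : M * list M) : M * list M := (fst x, [bigj j (fst x) (snd x)]).

Lemma prec_joinl x y : prec M x (pjoin x y).
Proof.
  apply prec_iff; simpl; split; [left; apply jle_joinl|].
  apply spec1_covered_incl, incl_appl, incl_refl.
Qed.

Lemma prec_joinr x y : prec M y (pjoin x y).
Proof.
  apply prec_iff; simpl; split; [left; apply jle_joinr|].
  apply spec1_covered_incl, incl_appr, incl_refl.
Qed.

Lemma prec_join_lub x y z : prec M x z -> prec M y z -> prec M (pjoin x y) z.
Proof.
  rewrite !prec_iff; intros [H1 H2] [H3 H4]; split.
  - exact (cond_a1_join H1 H3).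
  - exact (spec1_covered_app H2 H4).
Qed.

Lemma pK_ext x : prec M x (pK x).
Proof.
  apply prec_iff; split; [left; apply jle_refl|].
  destruct x as [a B]; apply spec1_covered_bigj.
Qed.

Lemma pK_mono x y : prec M x y -> prec M (pK x) (pK y).
Proof.
  destruct x as [a B], y as [c D]; rewrite !prec_iff; simpl; intros [H1 H2].
  pose proof (@spec1_covered_bigj c D) as HD.
  pose proof (spec1_covered_trans H2 HD) as HB.
  split; [exact (cond_a1_covered H1 HD)|].
  intros s [<-|[]]; exists (bigj j c D); split; [apply in_eq|].
  apply mspec1_bigj; [exact (cond_a1_spec1_bigj H1)|].
  intros b Hb; destruct (HB b Hb) as [t [[<-|[]] Sbt]]; exact Sbt.
Qed.

Lemma pK_idem x : pK (pK x) = pK x.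
Proof.
  destruct x as [a B]; unfold pK; simpl.
  assert (Ha : a <= bigj j a B) by apply bigj_ub, in_eq.
  now rewrite Ha.
Qed.

Lemma sim_refl x : sim M x x.
Proof. split; apply prec_refl. Qed.

Lemma sim_sym x y : sim M x y -> sim M y x.
Proof. intros [H1 H2]; split; assumption. Qed.

Lemma sim_trans x y z : sim M x y -> sim M y z -> sim M x z.
Proof. intros [H1 H2] [H3 H4]; split; eapply prec_trans; eassumption. Qed.

Lemma pjoin_prec x y x' y' : prec M x x' -> prec M y y' -> prec M (pjoin x y) (pjoin x' y').
Proof.
  intros Hx Hy; apply prec_join_lub;
    [eapply prec_trans; [exact Hx|apply prec_joinl]|eapply prec_trans; [exact Hy|apply prec_joinr]].
Qed.

Lemma pjoin_sim x y x' y' : sim M x x' -> sim M y y' -> sim M (pjoin x y) (pjoin x' y').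
Proof. intros [] []; split; apply pjoin_prec; assumption. Qed.

Lemma pK_sim x y : sim M x y -> sim M (pK x) (pK y).
Proof. intros [H1 H2]; split; apply pK_mono; assumption. Qed.

Lemma prec_iff_pjoin_sim x y : prec M x y <-> sim M (pjoin x y) y.
Proof.
  split.
  - intro H; split; [apply prec_join_lub; [exact H|apply prec_refl]|apply prec_joinr].
  - intros [H _]; eapply prec_trans; [apply prec_joinl|exact H].
Qed.

Lemma tcls_eq_iff x y : tcls M x = tcls M y <-> sim M x y.
Proof.
  split.
  - intro E; apply (f_equal (@proj1_sig _ _)) in E; simpl in E.
    apply sim_sym; rewrite <- E; apply sim_refl.
  - intro S; apply eq_sig_hprop; [intros; apply proof_irrelevance|]; simpl.
    apply functional_extensionality; intro z; apply propositional_extensionality.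
    split; intro H; eapply sim_trans; eauto; apply sim_sym, S.
Qed.

Lemma tcls_trep (X : tcar M) : tcls M (trep X) = X.
Proof.
  apply eq_sig_hprop; [intros; apply proof_irrelevance|]; unfold trep; simpl.
  destruct (constructive_indefinite_description _ (proj2_sig X)) as [x Hx]; simpl.
  now symmetry.
Qed.

Lemma trep_tcls x : sim M (trep (tcls M x)) x.
Proof. apply tcls_eq_iff, tcls_trep. Qed.

Lemma tcls_surj (X : tcar M) : exists x, X = tcls M x.
Proof. exists (trep X); symmetry; apply tcls_trep. Qed.

Lemma tjoin_tcls x y : tjoin (tcls M x) (tcls M y) = tcls M (pjoin x y).
Proof. apply tcls_eq_iff, pjoin_sim; apply trep_tcls. Qed.

Lemma tK_tcls x : tK (tcls M x) = tcls M (pK x).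
Proof. apply tcls_eq_iff, pK_sim, trep_tcls. Qed.

Lemma tle_tcls x y : tle (tcls M x) (tcls M y) <-> prec M x y.
Proof. unfold tle; rewrite tjoin_tcls, tcls_eq_iff; symmetry; apply prec_iff_pjoin_sim. Qed.

#[local] Instance join_semilattice_tilde : join_semilattice (@tjoin M).
Proof.
  constructor.
  - intros X Y Z; destruct (tcls_surj X) as [x ->], (tcls_surj Y) as [y ->],
      (tcls_surj Z) as [z ->].
    rewrite !tjoin_tcls; unfold pjoin; simpl; now rewrite join_assoc, app_assoc.
  - intros X Y; destruct (tcls_surj X) as [x ->], (tcls_surj Y) as [y ->].
    rewrite !tjoin_tcls; apply tcls_eq_iff.
    split; apply prec_join_lub; try apply prec_joinl; apply prec_joinr.
  - intro X; destruct (tcls_surj X) as [x ->]; rewrite tjoin_tcls; apply tcls_eq_iff.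
    split; [apply prec_join_lub; apply prec_refl|apply prec_joinl].
Qed.

Lemma tK_closure : closure_op (@tjoin M) (@tK M).
Proof.
  split.
  - intro X; destruct (tcls_surj X) as [x ->]; rewrite tK_tcls; apply tle_tcls, pK_ext.
  - intros X Y; destruct (tcls_surj X) as [x ->], (tcls_surj Y) as [y ->]; rewrite !tK_tcls.
    intro H; apply tle_tcls, pK_mono, tle_tcls, H.
  - intro X; destruct (tcls_surj X) as [x ->]; now rewrite !tK_tcls, pK_idem.
Qed.

Lemma mass_tilde : is_mass (Mtilde M).
Proof.
  constructor; simpl; unfold tspec; try apply join_semilattice_tilde.
  - intro X; apply (closure_ext tK_closure).
  - intros X Y1 Z Ys H1 H2; eapply jle_trans; [exact H1|].
    apply bigj_mono_head, (closure_le tK_closure), H2.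
  - intros X Y Z Zs H1 H2; exact (jle_trans H1 H2).
  - intros X Y Z Ys Zs H P; eapply jle_trans; [exact H|]; apply bigj_incl.
    intros W HW; eapply Permutation_in; [exact (Permutation_map (@tK M) P)|exact HW].
  - intros X Y Ys H; eapply jle_trans; [exact H|]; apply bigj_incl.
    rewrite map_app; apply incl_cons; [apply in_eq|].
    apply incl_app; [apply incl_tl, incl_refl|].
    intros W [<-|[]]; apply (in_map (@tK M) (Y :: Ys)), last_in_cons.
  - intros X Y Z Ys H; eapply jle_trans; [exact H|]; apply bigj_incl.
    rewrite map_app; apply incl_cons; [apply in_eq|apply incl_tl, incl_appl, incl_refl].
  - intros X X1 Y Ys H1 H2; apply join_le_iff; split; assumption.
Qed.

Lemma isK_tilde_iff (X Y : Mtilde M) : isK (Mtilde M) X Y <-> Y = tK X.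
Proof.
  split.
  - intros [H1 H2]; apply jle_antisym; [exact H1|apply H2, jle_refl].
  - intros ->; split; [apply jle_refl|intros Z HZ; exact HZ].
Qed.

Lemma regular_tilde : regular (Mtilde M).
Proof.
  split; [intro X; exists (tK X); now apply isK_tilde_iff|].
  intros X Y Ys; split.
  - intro H; exists (tK Y), (map (@tK M) Ys); split; [now apply isK_tilde_iff|split; [|exact H]].
    clear H; induction Ys; constructor; [now apply isK_tilde_iff|assumption].
  - intros [KY [KYs [HY [HYs H]]]]; apply isK_tilde_iff in HY; subst KY.
    replace KYs with (map (@tK M) Ys) in H; [exact H|].
    clear H; induction HYs; simpl; [reflexivity|].
    f_equal; [symmetry; now apply isK_tilde_iff|assumption].
Qed.

Lemma bigj_tcls x l : bigj (@tjoin M) (tcls M x) (map (tcls M) l) = tcls M (bigj pjoin x l).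
Proof.
  revert x; induction l as [|y l IH]; intro x; simpl; [reflexivity|].
  now rewrite tjoin_tcls, IH.
Qed.

Lemma bigj_pjoin_diag (k : M) K l :
  bigj pjoin (k, K) (map (fun c => (c, [c])) l) = (bigj j k l, K ++ l).
Proof.
  revert k K; induction l as [|c l IH]; intros k K; simpl; [now rewrite app_nil_r|].
  unfold pjoin at 2; simpl; now rewrite IH, <- app_assoc.
Qed.

Lemma map_tK_ups l : map (@tK M) (map (ups M) l) = map (tcls M) (map (fun c => (c, [c])) l).
Proof.
  induction l as [|c l IH]; cbn [map]; [reflexivity|].
  now rewrite IH; unfold ups; rewrite tK_tcls.
Qed.

Lemma tspec_ups_iff (a b : M) bs :
  tspec (ups M a) (ups M b) (map (ups M) bs) <-> prec M (a, []) (bigj j b bs, b :: bs).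
Proof.
  unfold tspec; rewrite map_tK_ups; unfold ups at 2; rewrite tK_tcls.
  change (pK (b, [])) with (b, [b]); rewrite bigj_tcls, bigj_pjoin_diag.
  apply tle_tcls.
Qed.

Lemma mspec_iff_prec (a b : M) bs : mspec M a b bs <-> prec M (a, []) (bigj j b bs, b :: bs).
Proof.
  rewrite prec_iff; simpl.
  change (mspec M a b bs) with (mspecl a (b :: bs)); rewrite mspecl_iff_cond_a1.
  split; [intro H; split; [exact H|intros _ []]|intros [H _]; exact H].
Qed.

Lemma embedding_ups : embedding (ups M).
Proof.
  split; [split|split].
  - intros a b; symmetry; apply tjoin_tcls.
  - intros a b bs H; apply tspec_ups_iff, mspec_iff_prec, H.
  - intros a b E; apply tcls_eq_iff in E; destruct E as [[Hab _] [Hba _]].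
    apply jle_antisym; assumption.
  - intros a b bs H; apply mspec_iff_prec, tspec_ups_iff, H.
Qed.

Lemma tcls_decomp (a : M) B :
  tcls M (a, B) = bigj (@tjoin M) (ups M a) (map (fun b => tK (ups M b)) B).
Proof.
  rewrite <- map_map, map_tK_ups; unfold ups at 1.
  rewrite bigj_tcls, bigj_pjoin_diag; simpl; apply tcls_eq_iff.
  split; apply prec_iff; simpl; split;
    try apply spec1_covered_incl, incl_refl.
  - left; apply bigj_ub, in_eq.
  - apply cond_a1_bigj.
Qed.

End Construction.

Section RegularTarget.
Variable T : msl.
Hypothesis HT : is_mass T.
Hypothesis RT : regular T.
Local Notation jT := (mjoin T).
Local Notation "a <= b" := (jle (mjoin T) a b).

#[local] Instance join_semilattice_T : join_semilattice (mjoin T) := join_semilattice_mass HT.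

Definition KT (x : T) : T := proj1_sig (constructive_indefinite_description _ (proj1 RT x)).

Lemma isK_KT x : isK T x (KT x).
Proof. exact (proj2_sig (constructive_indefinite_description _ (proj1 RT x))). Qed.

Lemma isK_unique x y y' : isK T x y -> isK T x y' -> y = y'.
Proof. intros [Sy Hy] [Sy' Hy']; apply jle_antisym; [apply Hy', Sy|apply Hy, Sy']. Qed.

Lemma Forall2_isK_map bs kbs : Forall2 (isK T) bs kbs -> kbs = map KT bs.
Proof.
  induction 1 as [|b kb bs kbs Hb _ IH]; simpl; [reflexivity|].
  now rewrite IH, (isK_unique Hb (isK_KT b)).
Qed.

Lemma mspec_regular_iff (a b : T) bs : mspec T a b bs <-> a <= bigj jT (KT b) (map KT bs).
Proof.
  split.
  - intro H; apply (proj2 RT) in H; destruct H as [kb [kbs [Hb [Hbs H]]]].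
    now rewrite (Forall2_isK_map Hbs), (isK_unique Hb (isK_KT b)) in H.
  - intro H; apply (proj2 RT); exists (KT b), (map KT bs).
    split; [apply isK_KT|split; [|exact H]].
    clear H; induction bs; constructor; [apply isK_KT|assumption].
Qed.

Lemma KT_closure : closure_op jT KT.
Proof.
  apply closure_op_intro.
  - intro x; apply (proj2 (isK_KT x)), (M1 HT).
  - intros x y H; apply (mspec_regular_iff _ _ []).
    apply (M2 HT _ x); [apply (proj1 (isK_KT x))|apply (mspec_regular_iff _ _ []), H].
Qed.

Section Universal.
Variable M : msl.
Hypothesis HM : is_mass M.
Variable eta : M -> T.
Hypothesis Heta : hom eta.

Definition eta_pair (x : M * list M) : T :=
  bigj jT (eta (fst x)) (map (fun b => KT (eta b)) (snd x)).

Lemma eta_pair_cond_a1 (a c : M) D : cond_a1 a c D -> eta a <= eta_pair (c, D).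
Proof.
  unfold eta_pair; simpl.
  intros [H|[d [S H]]]; eapply jle_trans; try apply (hom_le Heta H).
  - apply bigj_ub, in_eq.
  - rewrite (proj1 Heta); apply join_le_iff; split; [apply bigj_ub, in_eq|].
    destruct D as [|d1 ds]; [contradiction|].
    eapply jle_trans; [apply mspec_regular_iff, (proj2 Heta _ _ _ S)|].
    apply bigj_incl; rewrite map_map; apply incl_tl, incl_refl.
Qed.

Lemma eta_pair_mono x y : prec M x y -> eta_pair x <= eta_pair y.
Proof.
  destruct x as [a B], y as [c D]; rewrite (prec_iff HM); simpl; intros [H1 H2].
  unfold eta_pair at 1; simpl; apply bigj_le_iff; intros x [<-|Hx]; [exact (eta_pair_cond_a1 H1)|].
  apply in_map_iff in Hx; destruct Hx as [b [<- Hb]].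
  destruct (H2 b Hb) as [d [Hd S]].
  eapply jle_trans; [apply (closure_le KT_closure), (mspec_regular_iff _ _ []),
    (proj2 Heta _ _ _ S)|].
  apply bigj_ub, in_cons, (in_map (fun b => KT (eta b))), Hd.
Qed.

Definition eta_tilde (X : tcar M) : T := eta_pair (trep X).

Lemma eta_tilde_tcls x : eta_tilde (tcls M x) = eta_pair x.
Proof.
  destruct (trep_tcls HM x) as [H1 H2].
  apply jle_antisym; apply eta_pair_mono; assumption.
Qed.

Lemma eta_tilde_join X Y : eta_tilde (tjoin X Y) = jT (eta_tilde X) (eta_tilde Y).
Proof.
  destruct (tcls_surj X) as [x ->], (tcls_surj Y) as [y ->].
  rewrite (tjoin_tcls HM), !eta_tilde_tcls; unfold eta_pair, pjoin; simpl.
  now rewrite (proj1 Heta), map_app, bigj_app_join.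
Qed.

Lemma eta_tilde_K X : eta_tilde (tK X) = KT (eta_tilde X).
Proof.
  destruct (tcls_surj X) as [[a B] ->].
  rewrite (tK_tcls HM), !eta_tilde_tcls; unfold eta_pair, pK; simpl.
  rewrite <- map_map, (closure_bigj_map KT_closure), (bigj_morph _ _ (proj1 Heta)).
  apply (jle_trans (b := bigj jT (eta a) (map eta B)));
    [apply bigj_ub, in_eq|apply (closure_ext KT_closure)].
Qed.

Lemma Khom_eta_tilde : @Khom (Mtilde M) T eta_tilde.
Proof.
  split; [split|].
  - exact eta_tilde_join.
  - intros X Y Ys H; apply mspec_regular_iff.
    assert (Hle : eta_tilde X <= eta_tilde (bigj (@tjoin M) (tK Y) (map (@tK M) Ys))).
    { unfold jle; rewrite <- eta_tilde_join; now f_equal. }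
    rewrite (bigj_morph _ _ eta_tilde_join), map_map, eta_tilde_K in Hle.
    rewrite map_map; erewrite map_ext; [exact Hle|]; intro Z; symmetry; apply eta_tilde_K.
  - intros X KX HX; apply (isK_tilde_iff HM) in HX; subst KX.
    rewrite eta_tilde_K; apply isK_KT.
Qed.

Lemma eta_tilde_ups a : eta_tilde (ups M a) = eta a.
Proof. unfold ups; now rewrite eta_tilde_tcls. Qed.

Lemma Khom_unique (g : Mtilde M -> T) :
  Khom g -> (forall a, g (ups M a) = eta a) -> forall X, g X = eta_tilde X.
Proof.
  intros [[Hjoin _] HK] Hg X; destruct (tcls_surj X) as [[a B] ->].
  rewrite eta_tilde_tcls, (tcls_decomp HM); unfold eta_pair; simpl.
  change (bigj (@tjoin M)) with (bigj (mjoin (Mtilde M))).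
  rewrite (bigj_morph _ _ Hjoin), Hg, map_map; f_equal; apply map_ext; intro b.
  apply (isK_unique (x := eta b)); [|apply isK_KT].
  rewrite <- Hg; apply HK, (isK_tilde_iff HM); reflexivity.
Qed.

End Universal.
End RegularTarget.

Lemma tilde_universal (M : msl) (HM : is_mass M) (T : msl) (HT : is_mass T) (RT : regular T)
  (eta : M -> T) (Heta : hom eta) :
  exists f : Mtilde M -> T,
    Khom f /\ (forall a : M, f (ups M a) = eta a) /\
    (forall g : Mtilde M -> T, Khom g -> (forall a : M, g (ups M a) = eta a) ->
       forall x, g x = f x).
Proof.
  exists (eta_tilde RT eta); split; [|split].
  - exact (Khom_eta_tilde HT RT HM Heta).
  - exact (eta_tilde_ups HT RT HM Heta).
  - exact (Khom_unique HT RT HM Heta).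
Qed.

Theorem theorem4p4 (M : msl) (HM : is_mass M) :
  (* (1) *)
  (is_mass (Mtilde M) /\ regular (Mtilde M)) /\
  (* (2) *)
  embedding (ups M) /\
  (* (3) *)
  (forall T : msl, is_mass T -> regular T ->
   forall eta : M -> T, hom eta ->
   exists f : Mtilde M -> T,
     Khom f /\ (forall a : M, f (ups M a) = eta a) /\
     (forall g : Mtilde M -> T, Khom g -> (forall a : M, g (ups M a) = eta a) ->
        forall x, g x = f x)) /\
  (* (4) *)
  (forall U : msl, is_mass U ->
   forall psi : M -> U, hom psi ->
   exists f : Mtilde M -> Mtilde U,
     Khom f /\ (forall a : M, f (ups M a) = ups U (psi a)) /\
     (forall g : Mtilde M -> Mtilde U, Khom g ->
        (forall a : M, g (ups M a) = ups U (psi a)) ->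
        forall x, g x = f x)).
Proof.
  split; [split; [exact (mass_tilde HM)|exact (regular_tilde HM)]|].
  split; [exact (embedding_ups HM)|].
  split; [exact (tilde_universal HM)|].
  intros U HU psi Hpsi.
  apply (tilde_universal HM (mass_tilde HU) (regular_tilde HU)).
  exact (hom_comp Hpsi (proj1 (embedding_ups HU))).
Qed.
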